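(* Let $\Omega\subseteq\mathsf X$ be open and suppose $\mathsf X$ is strongly doubling within $\Omega$. Then there exists $C\in[1,\infty)$ depending only on $C_{\mathrm{SD}}[\Omega]$ such that: for every compact $V\subseteq\Omega$ there is $R>0$ such that, setting $S=\mathrm B(V,R)\cap\operatorname{supp}(\mathfrak m)$, for every $r\in(0,R]$ there exist an at most countable index set $I$, points $x_i\in S$ and functions $\varphi_i:\mathsf X\to[0,1]$ ($i\in I$) with: (i) $\sum_{i\in I}\chi_{\mathrm B(x_i,2r)}(x)\le C$ for every $x\in\mathsf X$; (ii) for each $i$, $\mathrm{Lip}[\varphi_i]\le C/r$ and $\operatorname{supp}(\varphi_i)\subseteq\mathrm B(x_i,r)$; (iii) $\sum_{i\in I}\varphi_i(x)=1$ for every $x\in\mathrm B(S,r/16)$.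
   Context: $(\mathsf X,\mathsf d)$ is a locally complete separable metric space of positive diameter with a locally finite Borel outer measure $\mathfrak m$, $\mathfrak m(\mathsf X)>0$; $\operatorname{supp}(\mathfrak m)$ is the set of points all of whose neighborhoods have positive measure. Closed balls $\mathrm B(x,r)=\{x':\mathsf d(x,x')\le r\}$, $\mathrm B(S,r)=\{x':\operatorname{dist}(S,\{x'\})\le r\}$; $\mathrm A(x,r,r')=\{x':r'<\mathsf d(x,x')\le r\}$. $\mathrm{Lip}[u]=\sup_{x\ne x'}|u(x)-u(x')|/\mathsf d(x,x')$; $\chi$ denotes a characteristic function; $\operatorname{supp}(\varphi)$ is the support of the function $\varphi$. $\mathsf X$ is strongly doubling within $\Omega$ if there is a constant $C_{\mathrm{SD}}[\Omega]\ge1$ and, for each compact $V\subseteq\Omega$, a radius $R_{\mathrm{SD}}[\Omega,V]>0$ such that $\mathfrak m(\mathrm B(x,2r))\le C_{\mathrm{SD}}[\Omega]\,\mathfrak m(\mathrm A(x,r,\tfrac{3r}{4}))$ for all $x\in\mathrm B(V,R_{\mathrm{SD}}[\Omega,V])\cap\operatorname{supp}(\mathfrak m)$ and $r\in(0,R_{\mathrm{SD}}[\Omega,V]]$. *)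

From HB Require Import structures.
From mathcomp Require Import all_boot all_order all_algebra.
From mathcomp Require Import all_classical all_reals all_analysis.
Set Implicit Arguments. Unset Strict Implicit. Unset Printing Implicit Defensive.
Import Order.TTheory GRing.Theory Num.Theory.
Local Open Scope classical_set_scope.
Local Open Scope ring_scope.

Section MetricDefs.
Variables (R : realType) (X : Type) (d : X -> X -> R).

Definition is_metric : Prop :=
  [/\ forall x y, 0 <= d x y,
      forall x y, d x y = 0 <-> x = y,
      forall x y, d x y = d y x &
      forall x y z, d x z <= d x y + d y z].

Definition cball (x : X) (r : R) : set X := [set x' | d x x' <= r].
Definition oball (x : X) (r : R) : set X := [set x' | d x x' < r].
Definition annulus (x : X) (r r' : R) : set X := [set x' | r' < d x x' <= r].

(** dist(S,{x'}) <= r, i.e. inf_{s in S} d(s,x') <= r (inf of empty = +oo) *)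
Definition dist_le (S : set X) (x' : X) (r : R) : Prop :=
  forall e, 0 < e -> exists2 s, S s & d s x' < r + e.
Definition sball (S : set X) (r : R) : set X := [set x' | dist_le S x' r].

Definition mopen (U : set X) : Prop :=
  forall x, U x -> exists2 e, 0 < e & oball x e `<=` U.

Definition mcompact (V : set X) : Prop :=
  forall (I : Type) (U : I -> set X), (forall i, mopen (U i)) ->
    V `<=` \bigcup_i U i ->
    exists (n : nat) (f : nat -> I), V `<=` \bigcup_(k in [set k | (k < n)%N]) U (f k).

Definition cauchy_seq (u : nat -> X) : Prop :=
  forall e, 0 < e -> exists N, forall m n, (N <= m)%N -> (N <= n)%N -> d (u m) (u n) < e.
Definition converges_to (u : nat -> X) (l : X) : Prop :=
  forall e, 0 < e -> exists N, forall n, (N <= n)%N -> d (u n) l < e.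

Definition locally_complete : Prop :=
  forall x, exists2 r, 0 < r & forall u : nat -> X,
    (forall n, cball x r (u n)) -> cauchy_seq u -> exists l, converges_to u l.

Definition separable : Prop :=
  exists f : nat -> X, forall x e, 0 < e -> exists n, d x (f n) < e.

Definition positive_diameter : Prop := exists x y, 0 < d x y.

(** support of a function: closure of {phi <> 0} *)
Definition fsupp (phi : X -> R) : set X :=
  [set y | forall e, 0 < e -> exists2 z, phi z != 0 & d y z < e].

Definition lip_le (u : X -> R) (L : R) : Prop :=
  forall x x', `|u x - u x'| <= L * d x x'.

Local Open Scope ereal_scope.
Variable m : set X -> \bar R.

Definition outer_measure_ax : Prop :=
  [/\ m set0 = 0, forall A, 0 <= m A,
      forall A B, A `<=` B -> m A <= m B &
      forall F : nat -> set X, m (\bigcup_n F n) <= \sum_(0 <= n <oo) m (F n)].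

Definition borel_sets : set (set X) := <<s setT, mopen >>.

Definition caratheodory_meas (A : set X) : Prop :=
  forall E, m E = m (E `&` A) + m (E `&` ~` A).

Definition borel_outer_measure : Prop :=
  outer_measure_ax /\ forall A, borel_sets A -> caratheodory_meas A.

Definition locally_finite : Prop :=
  forall x, exists2 r, (0 < r)%R & m (oball x r) < +oo.

Definition msupp : set X := [set x | forall r, (0 < r)%R -> 0 < m (oball x r)].

Definition strongly_doubling_within (Omega : set X) (Csd : R) : Prop :=
  (1 <= Csd)%R /\
  forall V, mcompact V -> V `<=` Omega ->
    exists2 Rsd, (0 < Rsd)%R &
      forall x r, sball V Rsd x -> msupp x -> (0 < r <= Rsd)%R ->
        m (cball x (2 * r)) <= Csd%:E * m (annulus x r (3 * r / 4)).

End MetricDefs.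

Definition standing_assumptions (R : realType) (X : Type) (d : X -> X -> R)
  (m : set X -> \bar R) : Prop :=
  [/\ is_metric d, locally_complete d, separable d & positive_diameter d] /\
  [/\ borel_outer_measure d m, locally_finite d m & (0 < m setT)%E].

From HB Require Import structures.
From mathcomp Require Import all_boot all_order all_algebra.
From mathcomp Require Import all_classical all_reals all_analysis.
From mathcomp Require Import ring lra.
Import Order.TTheory GRing.Theory Num.Theory.
Local Open Scope classical_set_scope.
Local Open Scope ring_scope.
Set Implicit Arguments. Unset Strict Implicit. Unset Printing Implicit Defensive.

(* Take a maximal r/32-separated subset {x_i} of S; it is countable
   since X is separable. Iterating the strong doubling inequality eleven times,
   each of the disjoint balls B(x_j, r/64) with x_j within 2r of a point y
   carries at least a Csd^-11 fraction of the measure of B(x_i0, 5r), which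
   contains them all; hence at most Csd^11 of the x_j lie in any ball of
   radius 2r. The cutoffs psi_i, equal to 1 on B(x_i, r/8) and 0 off
   B(x_i, r/4), are combined by stick-breaking,
   phi_i = psi_i prod_{j<i} (1 - psi_j): these sum to 1 - prod_j (1 - psi_j),
   which is 1 wherever some psi_j equals 1, in particular near S, and the
   Lipschitz constant of phi_i is at most 8/r times the number of psi_j that
   do not vanish near the two points compared. *)

Section Clamp.
Variable R : realFieldType.

Definition clamp (a : R) : R := if a <= 0 then 0 else if 1 <= a then 1 else a.

Lemma clamp01 a : 0 <= clamp a <= 1.
Proof.
by rewrite /clamp; case: (leP a 0) => ? /=; last case: (leP 1 a) => ? /=;
  apply/andP; split; lra.
Qed.

Lemma clamp_le0 a : a <= 0 -> clamp a = 0.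
Proof. by rewrite /clamp => ->. Qed.

Lemma clamp_ge1 a : 1 <= a -> clamp a = 1.
Proof. by move=> a_ge1; rewrite /clamp a_ge1; case: leP => //; lra. Qed.

Lemma clamp_lip a b : `|clamp a - clamp b| <= `|a - b|.
Proof.
have := ler_norm (a - b); have := ler_norm (b - a); rewrite distrC => h1 h2.
rewrite /clamp ler_norml.
by case: (leP a 0) => ? /=; case: (leP 1 a) => ? /=; case: (leP b 0) => ? /=;
  case: (leP 1 b) => ? /=; apply/andP; split; lra.
Qed.

End Clamp.

Section StickBreaking.
Variable R : realFieldType.
Implicit Types p q : nat -> R.

Definition stick p i : R := p i * \prod_(j < i) (1 - p j).

Lemma sum_stick p n : \sum_(i < n) stick p i = 1 - \prod_(j < n) (1 - p j).
Proof.
elim: n => [|n IH]; first by rewrite !big_ord0 subrr.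
by rewrite !big_ord_recr /= IH /stick; ring.
Qed.

Lemma stick_eq0 p i j : p j = 1 -> (j < i)%N -> stick p i = 0.
Proof.
by move=> pj1 ji; rewrite /stick (bigD1 (Ordinal ji)) //= pj1 subrr mul0r mulr0.
Qed.

Lemma prod01 (a : nat -> R) n : (forall j, 0 <= a j <= 1) ->
  0 <= \prod_(j < n) a j <= 1.
Proof.
by move=> a01; rewrite prodr_ge0 ?prodr_ile1 // => j _; case/andP: (a01 j).
Qed.

Lemma stick01 p i : (forall j, 0 <= p j <= 1) -> 0 <= stick p i <= 1.
Proof.
move=> p01; have p01' j : 0 <= 1 - p j <= 1.
  by case/andP: (p01 j) => ? ?; apply/andP; split; lra.
have /andP[P0 P1] := prod01 i p01'; have /andP[pi0 pi1] := p01 i.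
by rewrite /stick mulr_ge0 //= mulr_ile1.
Qed.

Lemma ler_dist_prod (a b : nat -> R) n :
  (forall j, 0 <= a j <= 1) -> (forall j, 0 <= b j <= 1) ->
  `|\prod_(j < n) a j - \prod_(j < n) b j| <= \sum_(j < n) `|a j - b j|.
Proof.
move=> a01 b01; elim: n => [|n IH]; first by rewrite !big_ord0 subrr normr0.
rewrite !big_ord_recr /=.
set P := \prod_(j < n) a j; set Q := \prod_(j < n) b j.
have /andP[P0 P1] := prod01 n a01; have /andP[Q0 Q1] := prod01 n b01.
have /andP[an0 an1] := a01 n; have /andP[bn0 bn1] := b01 n.
have -> : P * a n - Q * b n = (P - Q) * a n + Q * (a n - b n) by ring.
apply: (le_trans (ler_normD _ _)); rewrite !normrM (ger0_norm an0) (ger0_norm Q0).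
by apply: lerD; [apply: le_trans IH; rewrite ler_piMr | rewrite ler_piMl].
Qed.

Lemma ler_dist_stick p q i :
  (forall j, 0 <= p j <= 1) -> (forall j, 0 <= q j <= 1) ->
  `|stick p i - stick q i| <= \sum_(j < i.+1) `|p j - q j|.
Proof.
move=> p01 q01.
pose factor p' j := if j == i then p' j else 1 - p' j.
have factor01 p' j : (forall j, 0 <= p' j <= 1) -> 0 <= factor p' j <= 1.
  move=> p'01; rewrite /factor; case/andP: (p'01 j) => ? ?.
  by case: ifP => _; apply/andP; split; lra.
have stickE p' : stick p' i = \prod_(j < i.+1) factor p' j.
  rewrite big_ord_recr /= /factor eqxx mulrC; congr (_ * _).
  by apply: eq_bigr => j _; rewrite ltn_eqF.
rewrite !stickE.
apply: le_trans (ler_dist_prod _ (factor01 _ ^~ p01) (factor01 _ ^~ q01)) _.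
apply: ler_sum => j _; rewrite /factor; case: ifP => // _.
by rewrite distrC (_ : 1 - q j - (1 - p j) = p j - q j) //; ring.
Qed.

End StickBreaking.

Lemma sumr_nat_count (R : pzSemiRingType) (T : Type) (s : seq T) (P : pred T) :
  \sum_(i <- s) ((P i)%:R : R) = (count P s)%:R.
Proof.
rewrite -sum1_count natr_sum [RHS]big_mkcond.
by apply: eq_bigr => i _; case: (P i).
Qed.

Section ExtendedSums.
Variable R : realType.
Local Open Scope ereal_scope.

Lemma esum_nat_finite (I : set nat) (f : nat -> R) n :
  (forall i, (0 <= f i)%R) -> (forall i, ~ I i -> f i = 0%R) ->
  (forall i, (n <= i)%N -> f i = 0%R) ->
  \esum_(i in I) (f i)%:E = (\sum_(i < n) f i)%:E.
Proof.
move=> f_ge0 f_out f_big.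
rewrite esum_mkcond (eq_esum (b := fun i => (f i)%:E)); last first.
  move=> i _; case: ifPn => // /negP iI.
  by rewrite f_out // => Ii; apply: iI; apply/mem_set.
rewrite -nneseries_esumT => [|i]; last by rewrite lee_fin.
rewrite (nneseries_split 0 n) => [|i _]; last by rewrite lee_fin.
by rewrite add0n eseries0 ?adde0 ?sumEFin ?big_mkord // => i ni _; rewrite f_big.
Qed.

Lemma esum_indic_le (K : choiceType) (T : Type) (I : set K) (A : K -> set T)
    (x : T) (c : R) :
  (forall s, uniq s -> (forall i, i \in s -> I i /\ A i x) -> ((size s)%:R <= c)%R) ->
  \esum_(i in I) (\1_(A i) x)%:E <= c%:E.
Proof.
move=> bound; apply: ge_ereal_sup => _ [F [finF FI] <-].
rewrite fsbig_finite // sumEFin lee_fin.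
under eq_bigr do rewrite indicE.
rewrite sumr_nat_count -size_filter; apply: bound.
  by rewrite filter_uniq // finmap.fset_uniq.
move=> i; rewrite mem_filter => /andP[/set_mem Ai iF]; split => //.
by apply: FI; apply/set_mem; rewrite -in_fset_set.
Qed.

Lemma size_le_packing (T : eqType) (s : seq T) (a : T -> \bar R) (M : \bar R)
    (c : R) :
  0 < M -> M < +oo -> (0 <= c)%R -> (forall j, 0 <= a j) ->
  (forall j, j \in s -> M <= c%:E * a j) -> \sum_(j <- s) a j <= M ->
  ((size s)%:R <= c)%R.
Proof.
move=> M_gt0 M_fin c_ge0 a_ge0 M_le sum_le.
have /fineK eM : M \is a fin_num by rewrite ge0_fin_numE // ltW.
have Mr_gt0 : (0 < fine M)%R by rewrite -lte_fin eM.
rewrite -(ler_pM2r Mr_gt0) -lee_fin -eM.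
have -> : ((size s)%:R * fine M)%:E = \sum_(j <- s) M.
  by rewrite -eM sumEFin big_const_seq count_predT iter_addr addr0 mulr_natl.
rewrite EFinM eM; apply: le_trans (lee_wpmul2l _ sum_le); last by rewrite lee_fin.
rewrite ge0_sume_distrr // big_seq [X in _ <= X]big_seq.
exact: lee_sum.
Qed.

End ExtendedSums.

Section Metric.
Variables (R : realType) (X : Type) (d : X -> X -> R).
Hypothesis dm : is_metric d.

Lemma d_ge0 x y : 0 <= d x y. Proof. by case: dm. Qed.
Lemma d_xx x : d x x = 0. Proof. by case: dm => _ h _ _; apply/h. Qed.
Lemma d_sym x y : d x y = d y x. Proof. by case: dm. Qed.
Lemma d_tri x y z : d x z <= d x y + d y z. Proof. by case: dm. Qed.

Lemma mopen_oball x r : mopen d (oball d x r).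
Proof.
move=> y; rewrite /oball /= => xy; exists (r - d x y); first by rewrite subr_gt0.
by move=> z; rewrite /oball /= => yz; have := d_tri x y z; lra.
Qed.

Lemma sball_le V r r' : r <= r' -> sball d V r `<=` sball d V r'.
Proof.
by move=> rr' x Vx e e_gt0; have [s Vs sx] := Vx e e_gt0; exists s => //; lra.
Qed.

Definition separated (del : R) (A : set X) :=
  forall a b, A a -> A b -> a <> b -> del < d a b.

Lemma maximal_separated_subset (S : set X) del : 0 <= del ->
  exists A, [/\ A `<=` S, separated del A &
                forall s, S s -> exists2 a, A a & d a s <= del].
Proof.
move=> del_ge0; pose P A := A `<=` S /\ separated del A.
have [A [[AS Asep] Amax]] : exists A, P A /\ forall B, A `<` B -> ~ P B.
  apply: Zorn_bigcup => F FP Ftot; split.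
    by move=> x [B FB Bx]; have [+ _] := FP B FB; apply.
  move=> a b [A FA Aa] [B FB Bb] ab.
  have [AB|BA] := Ftot A B FA FB.
    by have [_ +] := FP B FB; apply => //; apply: AB.
  by have [_ +] := FP A FA; apply => //; apply: BA.
exists A; split => // s Ss; apply/not_notP => not_close.
have far a : A a -> del < d a s.
  by move=> Aa; rewrite ltNge; apply/negP => close; apply: not_close; exists a.
apply: (Amax (A `|` [set s])).
  split; first by move=> a Aa; left.
  by move=> /(_ s (or_intror erefl)) /far; rewrite d_xx; lra.
split; first by move=> a [/AS|->].
move=> a b [Aa|->] [Ab|->] ab.
- exact: Asep.
- exact: far.
- by rewrite d_sym; apply: far.
- by [].
Qed.

(* Each point of [A] is coded by the index of a dense point within [del / 2]
   of it; distinct points of [A] get distinct codes. *)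
Lemma separated_enum (A : set X) del :
  separable d -> 0 < del -> separated del A ->
  exists (I : set nat) (xs : nat -> X),
    [/\ forall i, I i -> A (xs i),
        forall i j, I i -> I j -> xs i = xs j -> i = j &
        forall a, A a -> exists2 i, I i & xs i = a].
Proof.
move=> [f dense] del_gt0 Asep.
have del2_gt0 : 0 < del / 2 by rewrite divr_gt0.
pose code a := xchoose (dense a _ del2_gt0).
have codeP a : d a (f (code a)) < del / 2 := xchooseP (dense a _ del2_gt0).
have code_inj a b : A a -> A b -> code a = code b -> a = b.
  move=> Aa Ab eq; apply/not_notP => ab.
  have := Asep a b Aa Ab ab; have := codeP a; have := codeP b; rewrite -eq.
  by have := d_tri a (f (code a)) b; rewrite (d_sym (f _) b); lra.
pose I := code @` A.
have [xs xsP] : {xs : nat -> X & forall n, I n -> A (xs n) /\ code (xs n) = n}.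
  apply: (@choice _ _ (fun n y => I n -> A y /\ code y = n)) => n.
  have [[a Aa <-]|nIn] := pselect (I n); first by exists a.
  by exists (f 0%N) => /nIn.
exists I, xs; split.
- by move=> i /xsP[].
- by move=> i j /xsP[_ ei] /xsP[_ ej] eq; rewrite -ei -ej eq.
- move=> a Aa; have Ia : I (code a) by exists a.
  by exists (code a) => //; have [Axs ec] := xsP _ Ia; apply: code_inj.
Qed.

Lemma separated_net (S : set X) del : separable d -> 0 < del ->
  exists (I : set nat) (xs : nat -> X),
    [/\ forall i, I i -> S (xs i),
        forall i j, I i -> I j -> i <> j -> del < d (xs i) (xs j) &
        forall s, S s -> exists2 i, I i & d (xs i) s <= del].
Proof.
move=> hsep del_gt0.
have [A [AS Asep Acover]] := maximal_separated_subset S (ltW del_gt0).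
have [I [xs [xsA xs_inj xs_onto]]] := separated_enum hsep del_gt0 Asep.
exists I, xs; split.
- by move=> i /xsA /AS.
- move=> i j Ii Ij ij; apply: Asep; [exact: xsA | exact: xsA |].
  by move/(xs_inj _ _ Ii Ij).
- move=> s /Acover[a Aa close]; have [i Ii xsa] := xs_onto a Aa.
  by exists i; rewrite ?xsa.
Qed.

Definition cutoff (c : X) (r : R) (y : X) : R := clamp (2 - 8 * d c y / r).

Lemma cutoff01 c r y : 0 <= cutoff c r y <= 1.
Proof. exact: clamp01. Qed.

Lemma cutoff_eq1 c r y : 0 < r -> d c y <= r / 8 -> cutoff c r y = 1.
Proof.
move=> r_gt0 cy; apply: clamp_ge1.
suff : 8 * d c y / r <= 1 by lra.
by rewrite ler_pdivrMr //; lra.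
Qed.

Lemma cutoff_eq0 c r y : 0 < r -> r / 4 <= d c y -> cutoff c r y = 0.
Proof.
move=> r_gt0 cy; rewrite /cutoff clamp_le0 //.
suff : 2 <= 8 * d c y / r by lra.
by rewrite ler_pdivlMr //; lra.
Qed.

Lemma cutoff_lip c r y y' : 0 < r ->
  `|cutoff c r y - cutoff c r y'| <= 8 / r * d y y'.
Proof.
move=> r_gt0; apply: le_trans (clamp_lip _ _) _.
have -> : 2 - 8 * d c y / r - (2 - 8 * d c y' / r) = 8 / r * (d c y' - d c y).
  by ring.
have k_ge0 : 0 <= 8 / r by rewrite divr_ge0 // ltW.
rewrite normrM (ger0_norm k_ge0); apply: ler_wpM2l => //.
have := d_tri c y y'; have := d_tri c y' y; rewrite (d_sym y' y).
by rewrite ler_norml => *; apply/andP; split; lra.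
Qed.

End Metric.

Section Measure.
Variables (R : realType) (X : Type) (d : X -> X -> R) (m : set X -> \bar R).
Hypotheses (dm : is_metric d) (hbm : borel_outer_measure d m).
Local Open Scope ereal_scope.

Lemma m_ge0 A : 0 <= m A. Proof. by case: hbm => -[]. Qed.

Lemma m_le A B : A `<=` B -> m A <= m B.
Proof. by case: hbm => -[] _ _ + _ _; apply. Qed.

Lemma caratheodory_oball x r : caratheodory_meas m (oball d x r).
Proof. by case: hbm => _; apply; apply: sub_sigma_algebra; apply: mopen_oball. Qed.

Lemma sum_measure_disjoint_le (T : eqType) (s : seq T) (A : T -> set X) (B : set X) :
  uniq s -> (forall i, i \in s -> caratheodory_meas m (A i)) ->
  (forall i, i \in s -> A i `<=` B) ->
  (forall i j, i \in s -> j \in s -> i != j -> forall z, A i z -> A j z -> False) ->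
  \sum_(i <- s) m (A i) <= m B.
Proof.
elim: s B => [|i s IH] B /=; first by rewrite big_nil => *; apply: m_ge0.
move=> /andP[i_notin s_uniq] meas sub disj.
rewrite big_cons (meas i (mem_head _ _) B) setIidr; last exact: sub (mem_head _ _).
apply: leeD => //; apply: IH => //.
- by move=> j js; apply: meas; rewrite inE js orbT.
- move=> j js z Ajz; split; first by apply: (sub j) => //; rewrite inE js orbT.
  move=> Aiz; apply: (disj i j) Aiz Ajz; rewrite ?inE ?js ?orbT ?eqxx //.
  by apply: contraNneq i_notin => ->.
- by move=> j k js ks; apply: disj; rewrite inE ?js ?ks orbT.
Qed.

End Measure.

Section Doubling.
Variables (R : realType) (X : Type) (d : X -> X -> R) (m : set X -> \bar R).
Hypotheses (dm : is_metric d) (hbm : borel_outer_measure d m).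
Hypothesis hlf : locally_finite d m.
Variables (Csd Rsd : R) (V : set X).
Hypothesis Csd_ge1 : 1 <= Csd.
Hypothesis doubling :
  forall x r, sball d V Rsd x -> msupp d m x -> 0 < r <= Rsd ->
  (m (cball d x (2 * r)) <= Csd%:E * m (annulus d x r (3 * r / 4)))%E.

Let Csd_ge0 : 0 <= Csd := le_trans ler01 Csd_ge1.

Definition doubling_center y := sball d V Rsd y /\ msupp d m y.

Lemma doubling_cball y rho : doubling_center y -> 0 < rho <= Rsd ->
  (m (cball d y (2 * rho)) <= Csd%:E * m (cball d y rho))%E.
Proof.
move=> [yV ysupp] rho_bd; apply: le_trans (doubling yV ysupp rho_bd) _.
apply: lee_wpmul2l; first by rewrite lee_fin.
by apply: (m_le hbm) => z /= /andP[].
Qed.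

Lemma doubling_cball_iter y k rho : doubling_center y -> 0 < rho ->
  2 ^+ k * rho <= 2 * Rsd ->
  (m (cball d y (2 ^+ k * rho)) <= (Csd ^+ k)%:E * m (cball d y rho))%E.
Proof.
move=> cy rho_gt0; elim: k => [|k IH] bd; first by rewrite expr0 mul1r mul1e.
have k_gt0 : 0 < 2 ^+ k * rho by rewrite mulr_gt0 // exprn_gt0.
have k_le : 2 ^+ k * rho <= Rsd by move: bd; rewrite exprS -mulrA; lra.
rewrite exprS -mulrA; apply: le_trans (doubling_cball cy _) _; first by rewrite k_gt0.
rewrite exprS EFinM -muleA; apply: lee_wpmul2l; first by rewrite lee_fin.
by apply: IH; lra.
Qed.

Lemma cball_finite y rho : doubling_center y -> 0 < rho <= 2 * Rsd ->
  (m (cball d y rho) < +oo)%E.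
Proof.
move=> cy /andP[rho_gt0 rho_le]; have [r1 r1_gt0 fin1] := hlf y.
pose k := (Num.truncn (rho / r1)).+1.
have rho_lt : rho / r1 < 2 ^+ k.
  apply: lt_le_trans (truncnS_gt _) _.
  by rewrite -natrX ler_nat; apply: ltnW (ltn_expl _ _).
have pow_gt0 : 0 < (2 : R) ^+ k by rewrite exprn_gt0.
have rhoE : rho = 2 ^+ k * (rho / 2 ^+ k) by rewrite mulrC divfK // gt_eqF.
rewrite rhoE; apply: le_lt_trans (doubling_cball_iter cy _ _) _.
- by rewrite divr_gt0.
- by rewrite -rhoE.
have small : cball d y (rho / 2 ^+ k) `<=` oball d y r1.
  move=> z; rewrite /cball /oball /= => yz; apply: le_lt_trans yz _.
  by rewrite ltr_pdivrMr // mulrC -ltr_pdivrMr.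
apply: lte_mul_pinfty => //; first by rewrite lee_fin exprn_ge0.
exact: le_lt_trans (m_le hbm small) fin1.
Qed.

Lemma doubling_cball_oball y rho :
  doubling_center y -> 0 < rho -> 512 * rho <= Rsd ->
  (m (cball d y (1024 * rho)) <= (Csd ^+ 11)%:E * m (oball d y rho))%E.
Proof.
move=> cy rho_gt0 rho_le.
have powE : (2 : R) ^+ 11 * (rho / 2) = 1024 * rho by rewrite !exprS expr0; lra.
rewrite -powE; apply: le_trans (doubling_cball_iter cy _ _) _; [lra | lra |].
apply: lee_wpmul2l; first by rewrite lee_fin exprn_ge0.
by apply: (m_le hbm) => z; rewrite /cball /oball /= => yz; lra.
Qed.

Lemma packing_count (J : set nat) (xs : nat -> X) (r : R) y s :
  (forall i, J i -> doubling_center (xs i)) ->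
  (forall i j, J i -> J j -> i <> j -> r / 32 < d (xs i) (xs j)) ->
  0 < r -> 8 * r <= Rsd -> uniq s ->
  (forall i, i \in s -> J i /\ d (xs i) y <= 2 * r) -> (size s)%:R <= Csd ^+ 11.
Proof.
move=> centers xs_sep r_gt0 r_le.
case: s => [|i0 s] s_uniq close_y; first exact: exprn_ge0.
have [Ji0 i0y] := close_y i0 (mem_head _ _).
apply: (size_le_packing (a := fun j => m (oball d (xs j) (r / 64)))
                        (M := m (cball d (xs i0) (5 * r)))).
- have r5_gt0 : 0 < 5 * r by lra.
  apply: (lt_le_trans ((centers _ Ji0).2 _ r5_gt0)).
  by apply: (m_le hbm) => z /ltW.
- by apply: (cball_finite (centers _ Ji0)); apply/andP; split; lra.
- exact: exprn_ge0.
- by move=> j; apply: (m_ge0 hbm).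
- move=> j js; have [Jj jy] := close_y j js.
  apply: le_trans (doubling_cball_oball (centers _ Jj) _ _); [|lra|lra].
  apply: (m_le hbm) => z; rewrite /cball /= => i0z.
  have := d_tri dm (xs j) (xs i0) z; have := d_tri dm (xs j) y (xs i0).
  by rewrite (d_sym dm y (xs i0)); lra.
- apply: (sum_measure_disjoint_le hbm) => //.
  + by move=> j _; apply: caratheodory_oball.
  + move=> j js z; rewrite /oball /cball /= => jz; have [_ jy] := close_y j js.
    have := d_tri dm (xs i0) y z; have := d_tri dm y (xs j) z.
    by rewrite (d_sym dm y (xs j)); lra.
  + move=> j k js ks jk z; rewrite /oball /= => jz kz.
    have [Jj _] := close_y j js; have [Jk _] := close_y k ks.
    have := xs_sep _ _ Jj Jk (elimN eqP jk); have := d_tri dm (xs j) z (xs k).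
    by rewrite (d_sym dm z (xs k)); lra.
Qed.

End Doubling.

Section PartitionOfUnity.
Variables (R : realType) (X : Type) (d : X -> X -> R).
Hypothesis dm : is_metric d.
Variables (J : set nat) (xs : nat -> X) (r : R).

Definition bump j y : R := if `[< J j >] then cutoff d (xs j) r y else 0.
Definition pou i y : R := stick (bump ^~ y) i.
Definition bump_on j y := `[< J j >] && (d (xs j) y < r / 4).

Lemma bump01 j y : 0 <= bump j y <= 1.
Proof. by rewrite /bump; case: ifP => _; [apply: cutoff01 | rewrite lexx ler01]. Qed.

Lemma bump_eq0 j y : 0 < r -> ~~ bump_on j y -> bump j y = 0.
Proof.
move=> r_gt0; rewrite /bump_on /bump negb_and => /orP[/negbTE -> //|].
by rewrite -leNgt; case: ifP => // _; apply: cutoff_eq0.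
Qed.

Lemma bump_lip j y y' : 0 < r ->
  `|bump j y - bump j y'| <=
    ((bump_on j y)%:R + (bump_on j y')%:R) * (8 / r * d y y').
Proof.
move=> r_gt0; have K_ge0 : 0 <= 8 / r * d y y'.
  by rewrite mulr_ge0 ?divr_ge0 ?(d_ge0 dm) // ltW.
have lip : `|bump j y - bump j y'| <= 8 / r * d y y'.
  by rewrite /bump; case: ifP => _; [apply: cutoff_lip | rewrite subrr normr0].
have [_|/(bump_eq0 r_gt0) by0] := boolP (bump_on j y);
  have [_|/(bump_eq0 r_gt0) by'0] := boolP (bump_on j y') => /=;
  try by apply: le_trans lip _; lra.
by rewrite by0 by'0 subrr normr0 add0r mul0r.
Qed.

Lemma pou01 i y : 0 <= pou i y <= 1.
Proof. by apply: stick01 => j; apply: bump01. Qed.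

Lemma pou_eq0 i y : ~ J i -> pou i y = 0.
Proof. by move=> Ji; rewrite /pou /stick /bump asboolF // mul0r. Qed.

Lemma fsupp_pou i : 0 < r -> fsupp d (pou i) `<=` cball d (xs i) r.
Proof.
move=> r_gt0 y supp_y.
have r34_gt0 : 0 < 3 * r / 4 by rewrite divr_gt0 ?mulr_gt0.
have [z pou_z yz] := supp_y _ r34_gt0.
have /andP[_ iz] : bump_on i z.
  apply: contraNT pou_z => /(bump_eq0 r_gt0) bump0.
  by rewrite /pou /stick bump0 mul0r.
by rewrite /cball /=; have := d_tri dm (xs i) z y; rewrite (d_sym dm z y); lra.
Qed.

Lemma esum_pou_eq1 y j : 0 < r -> J j -> d (xs j) y <= r / 8 ->
  (\esum_(i in J) (pou i y)%:E = 1)%E.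
Proof.
move=> r_gt0 Jj jy.
have bump1 : bump j y = 1 by rewrite /bump asboolT // cutoff_eq1.
rewrite (esum_nat_finite (n := j.+1)).
- by rewrite /pou sum_stick big_ord_recr /= bump1 subrr mulr0 subr0.
- by move=> i; case/andP: (pou01 i y).
- by move=> i; apply: pou_eq0.
- by move=> i ji; apply: stick_eq0 bump1 ji.
Qed.

Variable c : R.
Hypothesis overlap : forall y s, uniq s ->
  (forall i, i \in s -> J i /\ d (xs i) y <= 2 * r) -> (size s)%:R <= c.

Lemma sum_bump_on_le y n : 0 < r -> \sum_(j < n) (bump_on j y)%:R <= c.
Proof.
move=> r_gt0; rewrite -(big_mkord xpredT (fun j => (bump_on j y)%:R)).
rewrite /index_iota subn0 sumr_nat_count -size_filter.
apply: overlap; first by rewrite filter_uniq ?iota_uniq.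
by move=> i; rewrite mem_filter => /andP[/andP[/asboolP Ji iy] _]; split => //; lra.
Qed.

Lemma pou_lip i : 0 < r -> lip_le d (pou i) (16 * c / r).
Proof.
move=> r_gt0 y y'; set K := 8 / r * d y y'.
have K_ge0 : 0 <= K by rewrite mulr_ge0 ?divr_ge0 ?(d_ge0 dm) // ltW.
apply: le_trans (ler_dist_stick i (bump01 ^~ y) (bump01 ^~ y')) _.
apply: (@le_trans _ _ (\sum_(j < i.+1) ((bump_on j y)%:R + (bump_on j y')%:R) * K)).
  by apply: ler_sum => j _; apply: bump_lip.
have -> : 16 * c / r * d y y' = 2 * c * K by rewrite /K; ring.
rewrite -mulr_suml big_split /=; apply: ler_wpM2r => //.
by have := sum_bump_on_le y i.+1 r_gt0; have := sum_bump_on_le y' i.+1 r_gt0; lra.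
Qed.

End PartitionOfUnity.

Theorem proposition3p1 (R : realType) (Csd : R) :
  exists C : R, 1 <= C /\
  forall (X : Type) (d : X -> X -> R) (m : set X -> \bar R) (Omega : set X),
    standing_assumptions d m -> mopen d Omega ->
    strongly_doubling_within d m Omega Csd ->
    forall V : set X, mcompact d V -> V `<=` Omega ->
    exists2 Rad : R, 0 < Rad &
      let S := sball d V Rad `&` msupp d m in
      forall r : R, 0 < r <= Rad ->
      exists (I : set nat) (xs : nat -> X) (phi : nat -> X -> R),
        [/\ forall i, I i -> S (xs i),
            forall i, I i -> forall x, 0 <= phi i x <= 1,
            forall x, (\esum_(i in I) (\1_(cball d (xs i) (2 * r)) x)%:E <= C%:E)%E,
            forall i, I i -> lip_le d (phi i) (C / r) /\
                             fsupp d (phi i) `<=` cball d (xs i) r &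
            forall x, sball d S (r / 16) x ->
              (\esum_(i in I) (phi i x)%:E = 1)%E].
Proof.
have C_ge1 : 1 <= Num.max 1 Csd ^+ 11 by rewrite exprn_ege1 // le_max lexx.
exists (16 * Num.max 1 Csd ^+ 11); split; first lra.
move=> X d m Omega [[dm _ hsep _] [hbm hlf _]] _ [Csd_ge1 hSD] V Vc VO.
rewrite (max_idPr Csd_ge1) in C_ge1 *.
have [Rsd Rsd_gt0 doubling] := hSD V Vc VO.
exists (Rsd / 8) => [|S r /andP[r_gt0 r_le]]; first by rewrite divr_gt0.
have r32_gt0 : 0 < r / 32 by rewrite divr_gt0.
have [J [xs [xsS xs_sep xs_cover]]] := separated_net dm S hsep r32_gt0.
have centers i : J i -> doubling_center d m Rsd V (xs i).
  by move=> /xsS[xsV xs_supp]; split=> //; apply: sball_le xsV; lra.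
have r8_le : 8 * r <= Rsd by lra.
have overlap y s := packing_count (y := y) (s := s) dm hbm hlf Csd_ge1 doubling
  centers xs_sep r_gt0 r8_le.
exists J, xs, (pou d J xs r); split.
- exact: xsS.
- by move=> i _ x; apply: pou01.
- move=> x; have := esum_indic_le (A := fun i => cball d (xs i) (2 * r)) (overlap x).
  by move/le_trans; apply; rewrite lee_fin; lra.
- move=> i _; split; first exact: (pou_lip dm overlap).
  exact: (fsupp_pou dm).
- move=> y Sy; have r64_gt0 : 0 < r / 64 by rewrite divr_gt0.
  have [s Ss sy] := Sy _ r64_gt0.
  have [j Jj js] := xs_cover s Ss.
  by apply: (esum_pou_eq1 r_gt0 Jj); have := d_tri dm (xs j) s y; lra.
Qed.
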